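(* Let $\alpha\in(0,1)$ be irrational, and for $k\ge1$ write the $k$-th matrix of the Minkowski chain of $\alpha$ (case $n=1$) as $$B_k=\begin{pmatrix} q & -p\\ q' & -p'\end{pmatrix}.$$ Then the $k$-th pair in the Hurwitz chain of $\alpha$ is either $(\tfrac{p}{q},\tfrac{p'}{q'})$ or $(\tfrac{p'}{q'},\tfrac{p}{q})$.
   Context: Farey sets: for $m\in\mathbb{Z}^+$, $\mathcal{F}_m$ is the set of rationals in $[0,1]$ (in lowest terms) with denominator at most $m$, in increasing order. Hurwitz chain: for each $m$ let $(\tfrac{p}{q},\tfrac{p'}{q'})$ be the unique pair of successive elements of $\mathcal{F}_m$ with $\tfrac pq<\alpha<\tfrac{p'}{q'}$; the Hurwitz chain of $\alpha$ is the sequence of distinct such pairs as $m=1,2,3,\dots$, in order of appearance (first pair $(\tfrac01,\tfrac11)$). Minkowski chain (general definition, here used with $n=1$, $\alpha_1=\alpha$): Let $n\ge1$, $\ell=n+1$, $(\alpha_1,\dots,\alpha_n)\in\mathbb{R}^n$ with $\alpha_1,\dots,\alpha_n,1$ linearly independent over $\mathbb{Q}$. For $r=(r_1,\dots,r_\ell)\in\mathbb{Z}^\ell$ put $\xi(r)=r_1\alpha_1+\cdots+r_n\alpha_n+r_\ell$. For a real matrix or vector, $\|\cdot\|_\infty$ is the maximum absolute value of its entries. For $m\in\mathbb{Z}^+$, $A_m$ is the nonsingular integral $\ell\times\ell$ matrix with rows $w_1,\dots,w_\ell$ chosen successively: $w_i$ is the vector $w\in\mathbb{Z}^\ell$ with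 $\|w\|_\infty\le m$, linearly independent of $w_1,\dots,w_{i-1}$, minimizing $|\xi(w)|$, normalized so that its first nonzero entry is positive (this is unique by the linear independence hypothesis). Write $\beta_i=\xi(w_i)$, i.e. $A_m(\alpha_1,\dots,\alpha_n,1)^\top=(\beta_1,\dots,\beta_\ell)^\top$, so $0<|\beta_1|<\cdots<|\beta_\ell|$. The Minkowski chain $B_1,B_2,\dots$ is the sequence of distinct matrices among $A_1,A_2,A_3,\dots$ in order of appearance ($B_1=A_1$). *)

From Stdlib Require Import Reals ZArith List ClassicalEpsilon.
Open Scope R_scope.

Definition xi (alpha : R) (r : Z * Z) : R := IZR (fst r) * alpha + IZR (snd r).

Definition in_box (m : nat) (r : Z * Z) : Prop :=
  (Z.abs (fst r) <= Z.of_nat m)%Z /\ (Z.abs (snd r) <= Z.of_nat m)%Z.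

Definition normalized (r : Z * Z) : Prop :=
  (0 < fst r)%Z \/ (fst r = 0%Z /\ (0 < snd r)%Z).

Definition lin_indep2 (u v : Z * Z) : Prop :=
  forall a b : Z, (a * fst u + b * fst v = 0)%Z -> (a * snd u + b * snd v = 0)%Z ->
    a = 0%Z /\ b = 0%Z.

(* w1: minimizer of |xi| over nonzero vectors (= linearly independent of the
   empty family) in the box, normalized. *)
Definition is_w1 (alpha : R) (m : nat) (w : Z * Z) : Prop :=
  in_box m w /\ w <> (0%Z, 0%Z) /\ normalized w /\
  forall v, in_box m v -> v <> (0%Z, 0%Z) -> Rabs (xi alpha w) <= Rabs (xi alpha v).

Definition is_w2 (alpha : R) (m : nat) (w1 w : Z * Z) : Prop :=
  in_box m w /\ lin_indep2 w1 w /\ normalized w /\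
  forall v, in_box m v -> lin_indep2 w1 v -> Rabs (xi alpha w) <= Rabs (xi alpha v).

(* The matrix A_m, represented by its two rows (w1, w2). *)
Definition is_A (alpha : R) (m : nat) (M : (Z * Z) * (Z * Z)) : Prop :=
  is_w1 alpha m (fst M) /\ is_w2 alpha m (fst M) (snd M).

Definition A_mat (alpha : R) (m : nat) : (Z * Z) * (Z * Z) :=
  epsilon (inhabits ((0%Z, 0%Z), (0%Z, 0%Z))) (fun M => is_A alpha m M).

Definition in_Farey (m : nat) (x : R) : Prop :=
  exists p q : Z, (0 < q)%Z /\ (q <= Z.of_nat m)%Z /\ (0 <= p)%Z /\ (p <= q)%Z /\
    Z.gcd p q = 1%Z /\ x = IZR p / IZR q.

Definition is_H (alpha : R) (m : nat) (P : R * R) : Prop :=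
  in_Farey m (fst P) /\ in_Farey m (snd P) /\ fst P < alpha < snd P /\
  forall z, in_Farey m z -> ~ (fst P < z < snd P).

Definition H_pair (alpha : R) (m : nat) : R * R :=
  epsilon (inhabits (0, 0)) (fun P => is_H alpha m P).

(* Chains: the sequence of distinct values of f 1, f 2, f 3, ... in order of
   appearance.  [is_new f m]: f m differs from all earlier f j (1 <= j < m).
   [kth_new f k m]: m is the index where the k-th distinct value first
   appears, so the k-th chain element is f m. *)
Definition is_new {T : Type} (f : nat -> T) (m : nat) : Prop :=
  (1 <= m)%nat /\ forall j, (1 <= j < m)%nat -> f j <> f m.

Definition kth_new {T : Type} (f : nat -> T) (k m : nat) : Prop :=
  is_new f m /\
  exists l : list nat, NoDup l /\ length l = k /\
    (forall j, In j l <-> ((j <= m)%nat /\ is_new f j)).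

From Stdlib Require Import Reals ZArith List Lra Lia Psatz ClassicalEpsilon Classical Wf_nat.
Open Scope R_scope.

(* For m >= 1 let [p1/q1, p2/q2] be the interval of consecutive elements of
   F_m containing alpha.  It arises from [0/1, 1/1] by mediant insertion and
   satisfies q1 p2 - p1 q2 = 1 and q1, q2 <= m < q1 + q2.  With e = (q1, -p1)
   and f = (q2, -p2) we have xi(e) > 0 > xi(f).
   - Unimodularity and q1 + q2 > m write every vector of the box of radius m
     as a e + b f with a b <= 0, so |xi(a e + b f)| = |a| |xi e| + |b| |xi f|
     and the rows of A_m are e and f ordered by |xi| (section MinkowskiBasis,
     lemma A_mat_of_inv).
   - No fraction with denominator <= m lies strictly between p1/q1 and p2/q2,
     so the Hurwitz pair at level m is (p1/q1, p2/q2) (lemma H_pair_of_inv).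
   Hence A_m and H_m are injective functions of the Farey interval: the three
   sequences repeat at the same indices, so their chains have their k-th
   elements at the same index m.  Chain elements exist for every k because
   q1 + q2 > m forces new Farey intervals to keep appearing. *)

Definition same_repetitions {T U : Type} (f : nat -> T) (g : nat -> U) : Prop :=
  forall j m, (1 <= j)%nat -> (1 <= m)%nat -> (f j = f m <-> g j = g m).

Lemma is_new_transfer {T U} (f : nat -> T) (g : nat -> U) :
  same_repetitions f g -> forall m, is_new f m <-> is_new g m.
Proof.
  intros H m; unfold is_new; split; intros [Hm Hj]; split; auto;
    intros j Hjm E; apply (Hj j Hjm); apply H; auto; lia.
Qed.

Lemma kth_new_transfer {T U} (f : nat -> T) (g : nat -> U) :
  same_repetitions f g -> forall k m, kth_new f k m <-> kth_new g k m.
Proof.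
  intros H k m; pose proof (is_new_transfer f g H) as HT.
  unfold kth_new; rewrite HT; setoid_rewrite HT; tauto.
Qed.

Lemma kth_new_one {T} (f : nat -> T) : kth_new f 1 1.
Proof.
  split; [split; [lia | intros; lia] |].
  exists (1%nat :: nil); split; [constructor; [simpl; tauto | constructor] |].
  split; [reflexivity |]; intros j; simpl; split.
  - intros [<- | []]; split; [lia | split; [lia | intros; lia]].
  - intros [Hj [Hj1 _]]; left; lia.
Qed.

Lemma kth_new_succ {T} (f : nat -> T) k m :
  kth_new f k m -> (exists m', (m < m')%nat /\ is_new f m') -> exists m', kth_new f (S k) m'.
Proof.
  intros [Hn (l & Hnd & Hl & Hin)] Hafter.
  destruct (dec_inh_nat_subset_has_unique_least_element
              (fun n => (m < n)%nat /\ is_new f n) (fun n => classic _) Hafter)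
    as [m' [[[Hmm' Hn'] Hleast] _]].
  exists m'; split; [exact Hn' |].
  exists (m' :: l); split; [| split].
  - constructor; [intros Hi; apply Hin in Hi; lia | exact Hnd].
  - simpl; lia.
  - intros j; simpl; split.
    + intros [<- | Hi]; [split; auto |]. apply Hin in Hi as [Hj Hnj]; split; [lia | exact Hnj].
    + intros [Hj Hnj]; destruct (le_lt_dec j m) as [h | h]; [right; apply Hin; auto |].
      left; apply Nat.le_antisymm; [apply Hleast; auto | exact Hj].
Qed.

Lemma kth_new_exists {T} (f : nat -> T) :
  (forall m, exists m', (m < m')%nat /\ is_new f m') ->
  forall k, (1 <= k)%nat -> exists m, kth_new f k m.
Proof.
  intros Hafter k Hk; induction k as [| [| k] IH]; [lia | exists 1%nat; apply kth_new_one |].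
  destruct IH as [m Hm]; [lia |]; exact (kth_new_succ f _ m Hm (Hafter m)).
Qed.

Lemma jump_exists (g : nat -> Z) m n : (m <= n)%nat -> (g m < g n)%Z ->
  exists N, (m <= N < n)%nat /\ (g N < g (S N))%Z.
Proof.
  induction n as [| n IH]; intros Hmn Hlt.
  - assert (m = 0%nat) as -> by lia; lia.
  - destruct (Z.lt_ge_cases (g m) (g n)) as [L | L].
    + destruct IH as (N & HN & HgN); [destruct (Nat.eq_dec m (S n)); subst; lia | exact L |].
      exists N; split; [lia | exact HgN].
    + exists n; split; [destruct (Nat.eq_dec m (S n)); subst; lia | lia].
Qed.

Definition comb (a b : Z) (e f : Z * Z) : Z * Z :=
  ((a * fst e + b * fst f)%Z, (a * snd e + b * snd f)%Z).

Lemma comb_swap a b e f : comb a b e f = comb b a f e.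
Proof. unfold comb; f_equal; ring. Qed.

Lemma comb_10 e f : comb 1 0 e f = e.
Proof. destruct e, f; unfold comb; cbn [fst snd]; f_equal; ring. Qed.

Lemma comb_01 e f : comb 0 1 e f = f.
Proof. destruct e, f; unfold comb; cbn [fst snd]; f_equal; ring. Qed.

Lemma xi_comb alpha a b e f :
  xi alpha (comb a b e f) = IZR a * xi alpha e + IZR b * xi alpha f.
Proof. destruct e, f; unfold xi, comb; simpl; rewrite !plus_IZR, !mult_IZR; ring. Qed.

Lemma lin_indep2_sym u v : lin_indep2 u v -> lin_indep2 v u.
Proof. intros H a b E1 E2. destruct (H b a); lia. Qed.

Lemma lin_indep2_comb e f a b : lin_indep2 e f ->
  (lin_indep2 e (comb a b e f) <-> b <> 0%Z).
Proof.
  destruct e as [e1 e2], f as [f1 f2]; unfold lin_indep2, comb; cbn [fst snd]; intros H; split.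
  - intros H' Hb; subst b.
    destruct (H' a (-1)%Z) as [_ Hc]; cbn [fst snd]; [ring | ring | lia].
  - intros Hb c d H1 H2.
    destruct (H (c + d * a)%Z (d * b)%Z) as [Ha Hd]; [lia | lia |].
    apply Z.mul_eq_0 in Hd as [Hd | Hd]; [subst d; lia | lia].
Qed.

(* If X, Y have opposite signs and a, b weakly opposite signs, the terms a X
   and b Y have the same sign, so no cancellation occurs in a X + b Y. *)
Lemma Rabs_comb_opposite (a b : Z) (X Y : R) :
  (a * b <= 0)%Z -> X * Y < 0 ->
  Rabs (IZR a * X + IZR b * Y) = Rabs (IZR a) * Rabs X + Rabs (IZR b) * Rabs Y.
Proof.
  intros Hab HXY. apply IZR_le in Hab; rewrite mult_IZR in Hab.
  rewrite <- !Rabs_mult. unfold Rabs; repeat destruct Rcase_abs; nra.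
Qed.

Lemma Rabs_IZR_ge1 a : a <> 0%Z -> 1 <= Rabs (IZR a).
Proof. intros; rewrite <- abs_IZR; apply IZR_le; lia. Qed.

Lemma Rabs_IZR_le1 a : Rabs (IZR a) <= 1 -> (a = -1 \/ a = 0 \/ a = 1)%Z.
Proof. intros H; rewrite <- abs_IZR in H; apply le_IZR in H; lia. Qed.

Section MinkowskiBasis.
Variables (alpha : R) (m : nat) (e f : Z * Z).
Hypotheses (He : in_box m e) (Hf : in_box m f)
  (He1 : (0 < fst e)%Z) (Hf1 : (0 < fst f)%Z) (Hind : lin_indep2 e f)
  (Hdec : forall w, in_box m w -> exists a b, w = comb a b e f /\ (a * b <= 0)%Z)
  (Hsign : xi alpha e * xi alpha f < 0)
  (Hlt : Rabs (xi alpha e) < Rabs (xi alpha f)).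

Lemma box_Rabs_xi w : in_box m w -> exists a b, w = comb a b e f /\
  Rabs (xi alpha w) = Rabs (IZR a) * Rabs (xi alpha e) + Rabs (IZR b) * Rabs (xi alpha f).
Proof.
  intros Bw; destruct (Hdec w Bw) as (a & b & -> & Hab).
  exists a, b; split; [reflexivity|]. rewrite xi_comb; apply Rabs_comb_opposite; auto.
Qed.

Lemma Rabs_xi_e_pos : 0 < Rabs (xi alpha e).
Proof. apply Rabs_pos_lt; intro E; rewrite E in Hsign; lra. Qed.

Lemma e_is_w1 : is_w1 alpha m e.
Proof.
  split; [exact He|]; split; [destruct e; simpl in *; intro E; inversion E; lia|].
  split; [left; exact He1|].
  intros v Bv Hv; destruct (box_Rabs_xi v Bv) as (a & b & -> & ->).
  pose proof (Rabs_pos (IZR a)); pose proof (Rabs_pos (IZR b)); pose proof Rabs_xi_e_pos.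
  destruct (Z.eq_dec b 0) as [-> | Hb].
  - assert (Ha : a <> 0%Z) by (intros ->; apply Hv; destruct e, f; unfold comb; cbn [fst snd]; f_equal; ring).
    pose proof (Rabs_IZR_ge1 a Ha); nra.
  - pose proof (Rabs_IZR_ge1 b Hb); nra.
Qed.

Lemma f_is_w2 : is_w2 alpha m e f.
Proof.
  split; [exact Hf|]; split; [exact Hind|]; split; [left; exact Hf1|].
  intros v Bv Hv; destruct (box_Rabs_xi v Bv) as (a & b & -> & ->).
  apply lin_indep2_comb in Hv; auto.
  pose proof (Rabs_pos (IZR a)); pose proof (Rabs_IZR_ge1 b Hv); pose proof Rabs_xi_e_pos; nra.
Qed.

Lemma w1_unique w : is_w1 alpha m w -> w = e.
Proof.
  intros (Bw & Nw & Pw & Mw).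
  destruct (box_Rabs_xi w Bw) as (a & b & -> & Hr).
  specialize (Mw e He ltac:(destruct e; simpl in *; intro E; inversion E; lia)).
  rewrite Hr in Mw.
  pose proof (Rabs_pos (IZR a)); pose proof (Rabs_pos (IZR b)); pose proof Rabs_xi_e_pos.
  destruct (Z.eq_dec b 0) as [-> | Hb].
  2: { pose proof (Rabs_IZR_ge1 b Hb); exfalso; nra. }
  destruct (Rabs_IZR_le1 a ltac:(nra)) as [-> | [-> | ->]].
  - exfalso; destruct e, f; unfold normalized, comb in Pw; cbn [fst snd] in *; lia.
  - exfalso; apply Nw; destruct e, f; unfold comb; cbn [fst snd]; f_equal; ring.
  - apply comb_10.
Qed.

Lemma w2_unique w : is_w2 alpha m e w -> w = f.
Proof.
  intros (Bw & Iw & Pw & Mw).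
  destruct (box_Rabs_xi w Bw) as (a & b & -> & Hr).
  apply lin_indep2_comb in Iw; auto.
  specialize (Mw f Hf Hind); rewrite Hr in Mw.
  pose proof (Rabs_pos (IZR a)); pose proof (Rabs_IZR_ge1 b Iw); pose proof Rabs_xi_e_pos.
  assert (a = 0%Z) as ->.
  { assert (Ha : Rabs (IZR a) = 0) by nra.
    rewrite <- abs_IZR in Ha; apply eq_IZR in Ha; lia. }
  destruct (Rabs_IZR_le1 b ltac:(nra)) as [-> | [-> | ->]]; [| lia |].
  - exfalso; destruct e, f; unfold normalized, comb in Pw; cbn [fst snd] in *; lia.
  - apply comb_01.
Qed.

Lemma A_mat_basis : A_mat alpha m = (e, f).
Proof.
  assert (HA : is_A alpha m (A_mat alpha m)).
  { unfold A_mat; apply epsilon_spec; exists (e, f); split; [apply e_is_w1 | apply f_is_w2]. }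
  destruct (A_mat alpha m) as [w1 w2], HA as [H1 H2]; simpl in *.
  rewrite (w1_unique w1 H1) in *; rewrite (w2_unique w2 H2); reflexivity.
Qed.

End MinkowskiBasis.

Definition sort_by_xi (alpha : R) (e f : Z * Z) : (Z * Z) * (Z * Z) :=
  if Rlt_dec (Rabs (xi alpha e)) (Rabs (xi alpha f)) then (e, f) else (f, e).

Lemma A_mat_sorted alpha m e f :
  in_box m e -> in_box m f -> (0 < fst e)%Z -> (0 < fst f)%Z -> lin_indep2 e f ->
  (forall w, in_box m w -> exists a b, w = comb a b e f /\ (a * b <= 0)%Z) ->
  xi alpha e * xi alpha f < 0 -> Rabs (xi alpha e) <> Rabs (xi alpha f) ->
  A_mat alpha m = sort_by_xi alpha e f.
Proof.
  intros Be Bf Pe Pf Ief Dec Hs Hne; unfold sort_by_xi; destruct Rlt_dec as [L | L].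
  - now apply A_mat_basis.
  - apply A_mat_basis; auto; [now apply lin_indep2_sym | | lra | lra].
    intros w Bw; destruct (Dec w Bw) as (a & b & -> & Hab).
    exists b, a; rewrite comb_swap; split; [reflexivity | lia].
Qed.

Lemma sort_by_xi_inj alpha e f e' f' :
  0 < xi alpha e -> xi alpha f < 0 -> 0 < xi alpha e' -> xi alpha f' < 0 ->
  sort_by_xi alpha e f = sort_by_xi alpha e' f' -> e = e' /\ f = f'.
Proof.
  intros He Hf He' Hf'; unfold sort_by_xi.
  destruct Rlt_dec, Rlt_dec; intros E; injection E as E1 E2; subst; split; auto; lra.
Qed.

Definition vec (p q : Z) : Z * Z := (q, (- p)%Z).

Lemma xi_vec alpha p q : 0 < IZR q -> xi alpha (vec p q) = IZR q * (alpha - IZR p / IZR q).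
Proof. intros Hq; unfold xi, vec; cbn [fst snd]; rewrite opp_IZR; field; lra. Qed.

Lemma vec_inj p q p' q' : vec p q = vec p' q' -> p = p' /\ q = q'.
Proof. unfold vec; intros E; injection E; lia. Qed.

Lemma frac_lt_cross a b c d : 0 < IZR b -> 0 < IZR d ->
  IZR a / IZR b < IZR c / IZR d -> (a * d < c * b)%Z.
Proof.
  intros Hb Hd H; apply lt_IZR; rewrite !mult_IZR.
  apply (Rmult_lt_compat_r (IZR b * IZR d)) in H; [|nra].
  replace (IZR a / IZR b * (IZR b * IZR d)) with (IZR a * IZR d) in H by (field; lra).
  replace (IZR c / IZR d * (IZR b * IZR d)) with (IZR c * IZR b) in H by (field; lra).
  exact H.
Qed.

Lemma unimodular_between p1 q1 p2 q2 p q :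
  (0 < q1)%Z -> (0 < q2)%Z -> (0 < q)%Z -> (q1 * p2 - p1 * q2 = 1)%Z ->
  IZR p1 / IZR q1 < IZR p / IZR q < IZR p2 / IZR q2 -> (q1 + q2 <= q)%Z.
Proof.
  intros H1 H2 H Hd [L1 L2].
  apply frac_lt_cross in L1; [|apply IZR_lt; lia..].
  apply frac_lt_cross in L2; [|apply IZR_lt; lia..].
  assert (Eq : (q = q1 * (p2 * q - p * q2) + q2 * (p * q1 - p1 * q))%Z)
    by (transitivity (q * (q1 * p2 - p1 * q2))%Z; [rewrite Hd; ring | ring]).
  nia.
Qed.

Lemma unimodular_coprime p1 q1 p2 q2 : (q1 * p2 - p1 * q2 = 1)%Z ->
  Z.gcd p1 q1 = 1%Z /\ Z.gcd p2 q2 = 1%Z.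
Proof.
  intros Hd; split; apply Z.bezout_1_gcd.
  - exists (- q2)%Z, p2; lia.
  - exists q1, (- p1)%Z; lia.
Qed.

Lemma frac_inj p q p' q' : (0 < q)%Z -> (0 < q')%Z ->
  Z.gcd p q = 1%Z -> Z.gcd p' q' = 1%Z ->
  IZR p / IZR q = IZR p' / IZR q' -> p = p' /\ q = q'.
Proof.
  intros Hq Hq' G G' E.
  assert (HQ : 0 < IZR q) by (apply IZR_lt; lia).
  assert (HQ' : 0 < IZR q') by (apply IZR_lt; lia).
  assert (Cross : (p * q' = p' * q)%Z).
  { apply eq_IZR; rewrite !mult_IZR.
    replace (IZR p) with (IZR p / IZR q * IZR q) by (field; lra).
    rewrite E; field; lra. }
  assert (D1 : (q | q')%Z) by (apply (Z.gauss q p q'); [exists p'; lia | now rewrite Z.gcd_comm]).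
  assert (D2 : (q' | q)%Z) by (apply (Z.gauss q' p' q); [exists p; lia | now rewrite Z.gcd_comm]).
  assert (q = q') as <- by (apply Z.divide_antisym_nonneg; auto; lia).
  split; [nia | reflexivity].
Qed.

Lemma unimodular_indep p1 q1 p2 q2 : (q1 * p2 - p1 * q2 = 1)%Z ->
  lin_indep2 (vec p1 q1) (vec p2 q2).
Proof.
  intros Hd a b E1 E2; unfold vec in *; cbn [fst snd] in *.
  assert (Ea : (a = p2 * (a * q1 + b * q2) + q2 * (a * - p1 + b * - p2))%Z)
    by (transitivity (a * (q1 * p2 - p1 * q2))%Z; [rewrite Hd; ring | ring]).
  assert (Eb : (b = - p1 * (a * q1 + b * q2) - q1 * (a * - p1 + b * - p2))%Z)
    by (transitivity (b * (q1 * p2 - p1 * q2))%Z; [rewrite Hd; ring | ring]).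
  rewrite E1, E2 in Ea, Eb; lia.
Qed.

(* A unimodular pair with q1 + q2 > m writes every vector of the box of
   radius m with coefficients of weakly opposite signs: equal signs would give
   a first coordinate of absolute value at least q1 + q2. *)
Lemma unimodular_box_decomp m p1 q1 p2 q2 :
  (1 <= q1)%Z -> (1 <= q2)%Z -> (Z.of_nat m < q1 + q2)%Z -> (q1 * p2 - p1 * q2 = 1)%Z ->
  forall w, in_box m w ->
  exists a b, w = comb a b (vec p1 q1) (vec p2 q2) /\ (a * b <= 0)%Z.
Proof.
  intros H1 H2 Hs Hd [r1 r2] [B1 _]; cbn [fst snd] in *.
  exists (r1 * p2 + r2 * q2)%Z, (- (q1 * r2 + p1 * r1))%Z.
  set (a := (r1 * p2 + r2 * q2)%Z); set (b := (- (q1 * r2 + p1 * r1))%Z).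
  assert (Er1 : r1 = (a * q1 + b * q2)%Z)
    by (transitivity (r1 * (q1 * p2 - p1 * q2))%Z; [rewrite Hd; ring | unfold a, b; ring]).
  assert (Er2 : r2 = (a * - p1 + b * - p2)%Z)
    by (transitivity (r2 * (q1 * p2 - p1 * q2))%Z; [rewrite Hd; ring | unfold a, b; ring]).
  split; [unfold comb, vec; cbn [fst snd]; congruence |].
  clearbody a b; subst r1.
  destruct (Z.lt_trichotomy a 0) as [Ha | [Ha | Ha]];
    destruct (Z.lt_trichotomy b 0) as [Hb | [Hb | Hb]]; nia.
Qed.

Lemma is_H_unique alpha m P P' : is_H alpha m P -> is_H alpha m P' -> P = P'.
Proof.
  intros (F1 & F2 & [L1 L2] & N) (G1 & G2 & [K1 K2] & N').
  destruct P as [x y], P' as [x' y']; cbn [fst snd] in *; f_equal.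
  - destruct (Rtotal_order x x') as [h | [h | h]]; auto; exfalso.
    + apply (N x' G1); lra.
    + apply (N' x F1); lra.
  - destruct (Rtotal_order y y') as [h | [h | h]]; auto; exfalso.
    + apply (N' y F2); lra.
    + apply (N y' G2); lra.
Qed.

Lemma H_pair_eq alpha m P : is_H alpha m P -> H_pair alpha m = P.
Proof.
  intros HP; apply (is_H_unique alpha m); auto.
  unfold H_pair; apply epsilon_spec; now exists P.
Qed.

Record farey_interval := FI { pl : Z; ql : Z; pr : Z; qr : Z }.

Definition left_vec (I : farey_interval) : Z * Z := vec (pl I) (ql I).
Definition right_vec (I : farey_interval) : Z * Z := vec (pr I) (qr I).
Definition endpoints (I : farey_interval) : R * R :=
  (IZR (pl I) / IZR (ql I), IZR (pr I) / IZR (qr I)).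
Definition den_sum (I : farey_interval) : Z := (ql I + qr I)%Z.

(* Passing from F_(m-1) to F_m: the mediant enters exactly when its
   denominator is m, and replaces the endpoint on the same side of alpha. *)
Definition mediant_step (alpha : R) (m : nat) (I : farey_interval) : farey_interval :=
  if Z.eq_dec (den_sum I) (Z.of_nat m) then
    if Rlt_dec alpha (IZR (pl I + pr I) / IZR (den_sum I))
    then FI (pl I) (ql I) (pl I + pr I) (den_sum I)
    else FI (pl I + pr I) (den_sum I) (pr I) (qr I)
  else I.

Fixpoint farey_seq (alpha : R) (m : nat) : farey_interval :=
  match m with
  | O => FI 0 1 1 1
  | S m' => mediant_step alpha m (farey_seq alpha m')
  end.

Definition farey_inv (alpha : R) (m : nat) (I : farey_interval) : Prop :=
  (1 <= ql I <= Z.of_nat m)%Z /\ (1 <= qr I <= Z.of_nat m)%Z /\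
  (Z.of_nat m < den_sum I)%Z /\
  (0 <= pl I <= ql I)%Z /\ (0 <= pr I <= qr I)%Z /\
  (ql I * pr I - pl I * qr I = 1)%Z /\
  IZR (pl I) / IZR (ql I) < alpha < IZR (pr I) / IZR (qr I).

Lemma farey_inv_xi_signs alpha m I : farey_inv alpha m I ->
  0 < xi alpha (left_vec I) /\ xi alpha (right_vec I) < 0.
Proof.
  intros (Hq1 & Hq2 & _ & _ & _ & _ & L1 & L2).
  assert (Q1 : 0 < IZR (ql I)) by (apply IZR_lt; lia).
  assert (Q2 : 0 < IZR (qr I)) by (apply IZR_lt; lia).
  unfold left_vec, right_vec; rewrite !xi_vec by assumption; split; nra.
Qed.

Lemma H_pair_of_inv alpha m I : farey_inv alpha m I -> H_pair alpha m = endpoints I.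
Proof.
  intros (Hq1 & Hq2 & Hs & Hp1 & Hp2 & Hd & L1 & L2); unfold den_sum in Hs.
  destruct (unimodular_coprime _ _ _ _ Hd) as [G1 G2].
  apply H_pair_eq; unfold is_H, endpoints; cbn [fst snd].
  split; [exists (pl I), (ql I); repeat split; auto; lia |].
  split; [exists (pr I), (qr I); repeat split; auto; lia |].
  split; [lra |].
  intros z (p & q & Hq & Hqm & _ & _ & _ & ->) Hz.
  pose proof (unimodular_between (pl I) (ql I) (pr I) (qr I) p q ltac:(lia) ltac:(lia) Hq Hd Hz); lia.
Qed.

Lemma farey_interval_eq I J :
  pl I = pl J -> ql I = ql J -> pr I = pr J -> qr I = qr J -> I = J.
Proof. destruct I, J; cbn; intros; subst; reflexivity. Qed.

Lemma sort_by_xi_farey_inj alpha m n I J : farey_inv alpha m I -> farey_inv alpha n J ->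
  sort_by_xi alpha (left_vec I) (right_vec I) = sort_by_xi alpha (left_vec J) (right_vec J) ->
  I = J.
Proof.
  intros HI HJ E.
  destruct (farey_inv_xi_signs alpha m I HI) as [XI XI'], (farey_inv_xi_signs alpha n J HJ) as [XJ XJ'].
  destruct (sort_by_xi_inj alpha _ _ _ _ XI XI' XJ XJ' E) as [El Er].
  apply vec_inj in El as [], Er as []; now apply farey_interval_eq.
Qed.

Lemma endpoints_farey_inj alpha m n I J : farey_inv alpha m I -> farey_inv alpha n J ->
  endpoints I = endpoints J -> I = J.
Proof.
  intros (HqI & HqI' & _ & _ & _ & HdI & _) (HqJ & HqJ' & _ & _ & _ & HdJ & _) E.
  destruct (unimodular_coprime _ _ _ _ HdI), (unimodular_coprime _ _ _ _ HdJ).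
  unfold endpoints in E; injection E as El Er.
  apply frac_inj in El as [], Er as []; try lia; auto.
  now apply farey_interval_eq.
Qed.

Section Irrational.
Variable alpha : R.
Hypothesis Hirr : forall p q : Z, q <> 0%Z -> alpha <> IZR p / IZR q.

(* Mediant insertion preserves the invariant; irrationality rules out alpha
   being the mediant. *)
Lemma farey_inv_step m I : farey_inv alpha m I -> farey_inv alpha (S m) (mediant_step alpha (S m) I).
Proof.
  unfold farey_inv, mediant_step, den_sum; rewrite Nat2Z.inj_succ.
  intros (Hq1 & Hq2 & Hs & Hp1 & Hp2 & Hd & L1 & L2).
  destruct Z.eq_dec as [E | E]; [destruct Rlt_dec as [L | L] |]; cbn [pl ql pr qr].
  - repeat split; auto; lia.
  - assert (L' : IZR (pl I + pr I) / IZR (ql I + qr I) < alpha).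
    { destruct (Rtotal_order alpha (IZR (pl I + pr I) / IZR (ql I + qr I))) as [h | [h | h]]; auto.
      - contradiction.
      - exfalso; apply (Hirr (pl I + pr I) (ql I + qr I)); [lia | exact h]. }
    repeat split; auto; lia.
  - repeat split; auto; lia.
Qed.

(* An interval satisfying the invariant gives A_m; irrationality excludes
   |xi e| = |xi f|, which would make alpha the mediant. *)
Lemma A_mat_of_inv m I : farey_inv alpha m I ->
  A_mat alpha m = sort_by_xi alpha (left_vec I) (right_vec I).
Proof.
  intros HI.
  destruct (farey_inv_xi_signs alpha m I HI) as [X1 X2].
  destruct HI as (Hq1 & Hq2 & Hs & Hp1 & Hp2 & Hd & L1 & L2); unfold den_sum in Hs.
  apply A_mat_sorted; unfold left_vec, right_vec in *.
  - unfold in_box, vec; cbn [fst snd]; lia.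
  - unfold in_box, vec; cbn [fst snd]; lia.
  - unfold vec; cbn [fst snd]; lia.
  - unfold vec; cbn [fst snd]; lia.
  - now apply unimodular_indep.
  - apply unimodular_box_decomp; lia.
  - nra.
  - rewrite Rabs_right, Rabs_left by lra; intros E.
    apply (Hirr (pl I + pr I) (ql I + qr I)); [lia |].
    unfold xi, vec in E; cbn [fst snd] in E; rewrite !opp_IZR in E; rewrite !plus_IZR.
    replace (IZR (pl I) + IZR (pr I)) with ((IZR (ql I) + IZR (qr I)) * alpha) by lra.
    assert (0 < IZR (ql I) + IZR (qr I)) by (rewrite <- plus_IZR; apply IZR_lt; lia).
    field; lra.
Qed.

Hypothesis Halpha : 0 < alpha < 1.

Lemma farey_seq_inv m : (1 <= m)%nat -> farey_inv alpha m (farey_seq alpha m).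
Proof.
  induction m as [| [| m] IH]; intros Hm; [lia | |].
  - unfold farey_inv, den_sum; simpl; repeat split; try lia; lra.
  - apply farey_inv_step, IH; lia.
Qed.

Lemma den_sum_mono j n : (1 <= j <= n)%nat ->
  (den_sum (farey_seq alpha j) <= den_sum (farey_seq alpha n))%Z.
Proof.
  intros [Hj Hjn]; induction Hjn as [| n Hjn IH]; [lia |].
  destruct (farey_seq_inv n ltac:(lia)) as (Hq1 & Hq2 & _).
  simpl farey_seq; unfold mediant_step.
  destruct Z.eq_dec; [destruct Rlt_dec |]; unfold den_sum in *; cbn [ql qr]; lia.
Qed.

Lemma farey_seq_new_at_jump N : (1 <= N)%nat ->
  (den_sum (farey_seq alpha N) < den_sum (farey_seq alpha (S N)))%Z ->
  is_new (farey_seq alpha) (S N).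
Proof.
  intros HN Hjump; split; [lia |]; intros j Hj E.
  pose proof (den_sum_mono j N ltac:(lia)); rewrite E in *; lia.
Qed.

(* New Farey intervals keep appearing, since q1 + q2 > m. *)
Lemma farey_seq_new_after m : exists N, (m < N)%nat /\ is_new (farey_seq alpha) N.
Proof.
  set (m1 := Nat.max m 1).
  destruct (farey_seq_inv m1 ltac:(lia)) as (_ & _ & Hs & _).
  set (n := Z.to_nat (den_sum (farey_seq alpha m1))).
  destruct (farey_seq_inv n ltac:(lia)) as (_ & _ & Hn & _).
  destruct (jump_exists (fun i => den_sum (farey_seq alpha i)) m1 n) as (N & HN & Hjump);
    [lia | lia |].
  exists (S N); split; [lia |]; apply farey_seq_new_at_jump; [lia | exact Hjump].
Qed.

Lemma A_mat_same_repetitions : same_repetitions (A_mat alpha) (farey_seq alpha).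
Proof.
  intros j m Hj Hm; rewrite !A_mat_of_inv with (I := farey_seq alpha _) by (apply farey_seq_inv; auto).
  split; [apply (sort_by_xi_farey_inj alpha j m); apply farey_seq_inv; auto | now intros ->].
Qed.

Lemma H_pair_same_repetitions : same_repetitions (H_pair alpha) (farey_seq alpha).
Proof.
  intros j m Hj Hm; rewrite !H_pair_of_inv with (I := farey_seq alpha _) by (apply farey_seq_inv; auto).
  split; [apply (endpoints_farey_inj alpha j m); apply farey_seq_inv; auto | now intros ->].
Qed.

End Irrational.

Theorem theorem1 (alpha : R) (Halpha : 0 < alpha < 1)
  (Hirr : forall p q : Z, q <> 0%Z -> alpha <> IZR p / IZR q)
  (k : nat) (Hk : (1 <= k)%nat) :
  exists m m' : nat,
    kth_new (A_mat alpha) k m /\ kth_new (H_pair alpha) k m' /\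
    exists p q p' q' : Z,
      A_mat alpha m = ((q, (- p)%Z), (q', (- p')%Z)) /\
      (H_pair alpha m' = (IZR p / IZR q, IZR p' / IZR q') \/
       H_pair alpha m' = (IZR p' / IZR q', IZR p / IZR q)).
Proof.
  pose proof (A_mat_same_repetitions alpha Hirr Halpha) as HA.
  pose proof (H_pair_same_repetitions alpha Hirr Halpha) as HH.
  destruct (kth_new_exists _ (farey_seq_new_after alpha Hirr Halpha) k Hk) as [m Hm].
  assert (Hm1 : (1 <= m)%nat) by apply Hm.
  exists m, m.
  split; [now apply (kth_new_transfer _ _ HA) |].
  split; [now apply (kth_new_transfer _ _ HH) |].
  pose proof (farey_seq_inv alpha Hirr Halpha m Hm1) as HI.
  rewrite (A_mat_of_inv alpha Hirr m _ HI), (H_pair_of_inv alpha m _ HI).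
  destruct (farey_seq alpha m) as [p1 q1 p2 q2].
  unfold sort_by_xi, left_vec, right_vec, endpoints, vec; cbn [pl ql pr qr].
  destruct Rlt_dec; [exists p1, q1, p2, q2 | exists p2, q2, p1, q1]; split; auto.
Qed.
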